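(* Let $m\ge 1$, $M=2^m$, and let $P_{C_0}(0),\ldots,P_{C_{m-1}}(0)\in(0,1)$ be given, with $P_{C_k}(1)=1-P_{C_k}(0)$. Then for every $j\in\{0,\ldots,M-1\}$, $$\sum_{i=0}^{M-1}\gamma_{i,j}=M\sqrt{P_j},$$ and for every $k\in\{0,\ldots,m-1\}$, $$\sum_{i=0}^{M-1}(-1)^{n_{i,k}}\gamma_{i,j}=M(-1)^{n_{j,k}}\sqrt{P_j\,\frac{P_{C_k}(\bar n_{j,k})}{P_{C_k}(n_{j,k})}}.$$
   Context: For an integer $0\le i\le M-1$, $n_{i,k}\in\{0,1\}$ denotes the $k$-th bit of its base-2 representation, i.e. $i=\sum_{k=0}^{m-1}n_{i,k}2^k$; for a bit $b$, $\bar b=1-b$. The symbol probabilities are $P_i=\prod_{k=0}^{m-1}P_{C_k}(n_{i,k})$. The coefficients $\gamma_{i,j}$ are defined by $$\gamma_{i,j}=\prod_{k=0}^{m-1}\Big[(-1)^{\bar n_{i,k}n_{j,k}}\sqrt{P_{C_k}(0)}+(-1)^{n_{i,k}\bar n_{j,k}}\sqrt{P_{C_k}(1)}\Big].$$ *)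

From mathcomp Require Import all_boot all_order all_algebra.
Set Implicit Arguments. Unset Strict Implicit. Unset Printing Implicit Defensive.
Import Order.TTheory GRing.Theory Num.Theory.
Local Open Scope ring_scope.

Definition nbit (i k : nat) : bool := odd (i %/ 2 ^ k).

Definition PC (R : pzRingType) (m : nat) (p0 : 'I_m -> R) (k : 'I_m) (b : bool) : R :=
  if b then 1 - p0 k else p0 k.

Definition Psym (R : pzRingType) (m : nat) (p0 : 'I_m -> R) (i : nat) : R :=
  \prod_(k < m) PC p0 k (nbit i k).

Definition gamma (R : rcfType) (m : nat) (p0 : 'I_m -> R) (i j : nat) : R :=
  \prod_(k < m)
    ((-1) ^+ (~~ nbit i k && nbit j k) * Num.sqrt (PC p0 k false)
     + (-1) ^+ (nbit i k && ~~ nbit j k) * Num.sqrt (PC p0 k true)).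

From mathcomp Require Import all_boot all_order all_algebra ring.
Import Order.TTheory GRing.Theory Num.Theory.
Local Open Scope ring_scope.

(* gamma_{i,j} is a product over the bits k of a factor depending only on
   (n_{j,k}, n_{i,k}), so as i runs over all bit strings the sum over i of a
   product of one-bit factors splits into a product of two-term sums.  Weighting
   by the signs (-1)^{n_{i,k}} (for k in a set S) keeps this structure, and each
   two-term sum equals 2 (-1)^{n_{j,k} [k in S]} sqrt P_{C_k}(n_{j,k} xor [k in S]).
   Taking S empty or S = {k} gives the two identities. *)

Lemma nbit_small i m : (i < 2 ^ m)%N -> nbit i m = false.
Proof. by move=> lt_i; rewrite /nbit divn_small. Qed.

Lemma nbit_expD_top i m : (i < 2 ^ m)%N -> nbit (2 ^ m + i) m = true.
Proof.
move=> lt_i; rewrite /nbit addnC -[X in (_ + X)%N]mul1n divnDMl ?expn_gt0 //.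
by rewrite divn_small.
Qed.

Lemma nbit_expD_low i m k : (k < m)%N -> nbit (2 ^ m + i) k = nbit i k.
Proof.
move=> lt_km; rewrite /nbit addnC -(subnK (ltnW lt_km)) expnD divnDMl ?expn_gt0 //.
by rewrite oddD oddX subn_eq0 leqNgt lt_km addbF.
Qed.

Lemma sum_prod_nbit (R : comPzSemiRingType) m (F : 'I_m -> bool -> R) :
  \sum_(i < 2 ^ m) \prod_(k < m) F k (nbit i k)
  = \prod_(k < m) (F k false + F k true).
Proof.
elim: m F => [|m IHm] F; first by rewrite expn0 big_ord1 !big_ord0.
rewrite expnS mul2n -addnn big_split_ord /= big_ord_recr /=.
rewrite -(IHm (fun k => F (widen_ord (leqnSn m) k))) mulrDr !big_distrl /=.
congr (_ + _); apply: eq_bigr => i _; rewrite big_ord_recr /=.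
  by rewrite nbit_small.
rewrite nbit_expD_top //; congr (_ * _).
by apply: eq_bigr => k _; rewrite nbit_expD_low.
Qed.

Lemma sqrtr_prod (R : rcfType) (I : Type) (r : seq I) (P : pred I) (F : I -> R) :
  (forall i, P i -> 0 <= F i) ->
  Num.sqrt (\prod_(i <- r | P i) F i) = \prod_(i <- r | P i) Num.sqrt (F i).
Proof.
move=> F_ge0.
suff [] : 0 <= \prod_(i <- r | P i) F i /\
  \prod_(i <- r | P i) Num.sqrt (F i) = Num.sqrt (\prod_(i <- r | P i) F i) by [].
apply: (big_ind2 (fun a b => 0 <= b /\ a = Num.sqrt b)); first by rewrite sqrtr1.
  by move=> x1 x2 y1 y2 [y1_ge0 ->] [y2_ge0 ->]; rewrite mulr_ge0 // sqrtrM.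
by move=> i Pi; split; first exact: F_ge0.
Qed.

Lemma prod_sign_pred1 (R : comPzRingType) m (b : 'I_m -> bool) (k : 'I_m) :
  \prod_(l < m) (-1) ^+ (b l && (l == k)) = (-1) ^+ b k :> R.
Proof.
rewrite (bigD1 k) //= eqxx andbT big1 ?mulr1 // => l /negbTE neq_lk.
by rewrite neq_lk andbF.
Qed.

Lemma prod_mul_ratio (R : fieldType) (I : finType) (F : I -> R) (k : I) (a : R) :
  F k != 0 -> \prod_l F l * (a / F k) = \prod_l (if l == k then a else F l).
Proof.
move=> Fk_neq0; rewrite (bigD1 k) // [RHS](bigD1 k) //= eqxx.
by rewrite [in RHS](eq_bigr F) => [|l /negbTE -> //]; field.
Qed.

(* [gamma p0 i j] is convertible to
   [\prod_k gamma_factor (fun b => Num.sqrt (PC p0 k b)) (nbit j k) (nbit i k)]. *)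
Definition gamma_factor {R : pzRingType} (f : bool -> R) (c b : bool) : R :=
  (-1) ^+ (~~ b && c) * f false + (-1) ^+ (b && ~~ c) * f true.

Lemma gamma_factor_signed_sum (R : comPzRingType) (f : bool -> R) (c s : bool) :
  gamma_factor f c false + (-1) ^+ s * gamma_factor f c true
  = 2 * (-1) ^+ (c && s) * f (c (+) s).
Proof. by case: c; case: s; rewrite /gamma_factor /= ?expr0 ?expr1; ring. Qed.

Lemma sum_signed_gamma {R : rcfType} {m} (p0 : 'I_m -> R) (S : 'I_m -> bool) (j : nat) :
  \sum_(i < 2 ^ m) (\prod_(l < m) (-1) ^+ (nbit i l && S l)) * gamma p0 i j
  = \prod_(l < m)
      (2 * (-1) ^+ (nbit j l && S l) * Num.sqrt (PC p0 l (nbit j l (+) S l))).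
Proof.
pose F l b := (-1) ^+ (b && S l) *
  gamma_factor (fun b => Num.sqrt (PC p0 l b)) (nbit j l) b.
rewrite (eq_bigr (fun i : 'I_(2 ^ m) => \prod_(l < m) F l (nbit i l))); last first.
  by move=> i _; rewrite /gamma -big_split.
rewrite sum_prod_nbit; apply: eq_bigr => l _.
by rewrite /F /= expr0 mul1r gamma_factor_signed_sum.
Qed.

Theorem corollary1 (R : rcfType) (m : nat) (p0 : 'I_m -> R) :
  (1 <= m)%N ->
  (forall k, 0 < p0 k < 1) ->
  forall j : 'I_(2 ^ m),
    \sum_(i < 2 ^ m) gamma p0 i j = (2 ^ m)%:R * Num.sqrt (Psym p0 j)
    /\
    forall k : 'I_m,
      \sum_(i < 2 ^ m) (-1) ^+ nbit i k * gamma p0 i j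
      = (2 ^ m)%:R * (-1) ^+ nbit j k *
        Num.sqrt (Psym p0 j * (PC p0 k (~~ nbit j k) / PC p0 k (nbit j k))).
Proof.
move=> _ p0_bounds j.
have PC_gt0 k b : 0 < PC p0 k b.
  by have /andP[] := p0_bounds k; case: b => /= *; rewrite ?subr_gt0.
have sqrt_prod_PC (b : 'I_m -> bool) :
    Num.sqrt (\prod_(l < m) PC p0 l (b l)) = \prod_(l < m) Num.sqrt (PC p0 l (b l)).
  by apply: sqrtr_prod => l _; apply: ltW.
have prod_two : \prod_(l < m) 2 = (2 ^ m)%:R :> R.
  by rewrite prodr_const card_ord natrX.
split.
  have := sum_signed_gamma p0 (fun=> false) j.
  under eq_bigr do under eq_bigr do rewrite andbF expr0.
  under eq_bigr do rewrite big1_eq mul1r.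
  under [RHS]eq_bigr do rewrite andbF addbF mulr1.
  by move=> ->; rewrite big_split /= prod_two /Psym sqrt_prod_PC.
move=> k; have := sum_signed_gamma p0 (fun l => l == k) j.
under eq_bigr do rewrite prod_sign_pred1.
move=> ->; rewrite !big_split /= prod_two prod_sign_pred1; congr (_ * _).
rewrite /Psym prod_mul_ratio ?gt_eqF //.
rewrite [in RHS](eq_bigr (fun l => PC p0 l (nbit j l (+) (l == k)))) ?sqrt_prod_PC //.
by move=> l _; case: eqP => [->|_]; rewrite ?addbT ?addbF.
Qed.
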